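(* For the operator $A\colon c_c\to c_c$, $(Ax)_1=x_1$, $(Ax)_n=x_n-x_{n-1}$ ($n>1$), the point $x=0$ minimizes $f\circ A$ over $c_c$, and $\min_{x\in c_c} f(Ax)=f(0)=\pi^2/12$. Moreover, the directional derivative of $f\circ A$ at $0$ vanishes in every direction $y\in c_c$.
   Context: Let $c_c$ be the space of finitely supported real sequences with the $\ell^2$-norm. Let $f\colon c_c\to\mathbb{R}$, $f(x)=\sum_{n=1}^\infty \frac{n^2}{2}(x_n-n^{-2})^2$. *)

From Stdlib Require Import Reals.
From Coquelicot Require Import Coquelicot.
Open Scope R_scope.

(* Real sequences x_1, x_2, ... are encoded as  x : nat -> R  with
   x k standing for x_{k+1} (index shift by one). *)

Definition cc (x : nat -> R) : Prop :=
  exists N : nat, forall k : nat, (N <= k)%nat -> x k = 0.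

Definition f_term (x : nat -> R) (k : nat) : R :=
  (INR (k + 1)) ^ 2 / 2 * (x k - / (INR (k + 1)) ^ 2) ^ 2.

Definition fobj (x : nat -> R) : R := Series (f_term x).

Definition opA (x : nat -> R) : nat -> R :=
  fun k => match k with
           | O => x O
           | S j => x (S j) - x j
           end.

Definition zero_seq : nat -> R := fun _ => 0.

(* Expanding the square, for finitely supported z
     f(z) = sum_n 1/(2 n^2) + sum_n (n^2/2 z_n^2 - z_n).
   When z = Ax the linear part telescopes to the last coordinate of x, which is 0, so
     f(Ax) = pi^2/12 + sum_n n^2/2 (Ax)_n^2,
   a constant plus a nonnegative quadratic form Q(Ax): it is minimal at 0, and
   (f(A(ty)) - f(A 0)) / t = t Q(Ay) tends to 0.
   The constant sum_n 1/n^2 = pi^2/6 is obtained from Matsuoka's integrals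
   I_n = int_0^(pi/2) cos^(2n) and J_n = int_0^(pi/2) x^2 cos^(2n): integrating by parts,
   1/(n+1)^2 = 2 (J_n/I_n - J_(n+1)/I_(n+1)), while J_n/I_n = O(1/n). *)

From Stdlib Require Import Reals Lra Lia Nsatz.
From Coquelicot Require Import Coquelicot.
Open Scope R_scope.

(** * The Basel series *)

Lemma is_RInt_of_derive (F f : R -> R) (a b : R) :
  (forall x, is_derive F x (f x)) -> (forall x, ex_derive f x) ->
  is_RInt f a b (F b - F a).
Proof.
intros dF df. apply (is_RInt_derive F f a b).
- intros x _; apply dF.
- intros x _; apply (@ex_derive_continuous R_AbsRing R_NormedModule), df.
Qed.

Lemma is_RInt_lincomb (f g : R -> R) (a b p q A B : R) :
  is_RInt f a b A -> is_RInt g a b B ->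
  is_RInt (fun x => p * f x + q * g x) a b (p * A + q * B).
Proof.
intros Hf Hg.
exact (is_RInt_plus _ _ _ _ _ _ (is_RInt_scal _ _ _ p _ Hf) (is_RInt_scal _ _ _ q _ Hg)).
Qed.

Lemma is_RInt_ext_unique (f g : R -> R) (a b A B : R) :
  is_RInt f a b A -> is_RInt g a b B -> (forall x, f x = g x) -> A = B.
Proof.
intros Hf Hg Efg. apply (is_RInt_ext _ _ _ _ _ (fun x _ => Efg x)) in Hf.
now rewrite <- (is_RInt_unique _ _ _ _ Hf), (is_RInt_unique _ _ _ _ Hg).
Qed.

Definition wallis_integral (n : nat) : R := RInt (fun x => cos x ^ (2 * n)) 0 (PI / 2).
Definition matsuoka_integral (n : nat) : R := RInt (fun x => x ^ 2 * cos x ^ (2 * n)) 0 (PI / 2).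

Lemma is_RInt_wallis n : is_RInt (fun x => cos x ^ (2 * n)) 0 (PI / 2) (wallis_integral n).
Proof.
apply (@RInt_correct R_CompleteNormedModule), (@ex_RInt_continuous R_CompleteNormedModule).
intros z _. apply (@ex_derive_continuous R_AbsRing R_NormedModule). auto_derive. easy.
Qed.

Lemma is_RInt_matsuoka n :
  is_RInt (fun x => x ^ 2 * cos x ^ (2 * n)) 0 (PI / 2) (matsuoka_integral n).
Proof.
apply (@RInt_correct R_CompleteNormedModule), (@ex_RInt_continuous R_CompleteNormedModule).
intros z _. apply (@ex_derive_continuous R_AbsRing R_NormedModule). auto_derive. easy.
Qed.

Lemma is_derive_sin_mul_cos_pow m x :
  is_derive (fun x => sin x * cos x ^ S m) x
    ((INR m + 2) * cos x ^ S (S m) - (INR m + 1) * cos x ^ m).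
Proof.
auto_derive; [easy|].
pose proof (sin2_cos2 x) as Hpyth; unfold Rsqr in Hpyth.
change (match m with 0%nat => 1 | S _ => INR m + 1 end) with (INR (S m)).
rewrite S_INR. simpl. nsatz.
Qed.

(* The coefficient (m+2)/2 is chosen so that the terms in x sin x cos^(m+1) x cancel. *)
Lemma is_derive_matsuoka_primitive m x :
  is_derive (fun x => x * cos x ^ S (S m) + (INR m + 2) / 2 * (x ^ 2 * sin x * cos x ^ S m)) x
    (cos x ^ S (S m) - (INR m + 2) * (INR m + 1) / 2 * (x ^ 2 * cos x ^ m)
     + (INR m + 2) ^ 2 / 2 * (x ^ 2 * cos x ^ S (S m))).
Proof.
auto_derive; [easy|].
pose proof (sin2_cos2 x) as Hpyth; unfold Rsqr in Hpyth.
assert (Hhalf : / 2 * 2 = 1) by field.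
change (match m with 0%nat => 1 | S _ => INR m + 1 end) with (INR (S m)).
change (match S m with 0%nat => 1 | S _ => INR (S m) + 1 end) with (INR (S (S m))).
rewrite !S_INR. simpl. unfold Rdiv. nsatz.
Qed.

Lemma two_mul_S n : (2 * S n = S (S (2 * n)))%nat.
Proof. lia. Qed.

Lemma wallis_integral_rec n :
  (2 * INR n + 2) * wallis_integral (S n) = (2 * INR n + 1) * wallis_integral n.
Proof.
assert (Hder := is_RInt_of_derive _ _ 0 (PI / 2) (is_derive_sin_mul_cos_pow (2 * n))
                  (fun x => ltac:(auto_derive; easy))).
assert (Hcomb := is_RInt_lincomb _ _ _ _ (INR (2 * n) + 2) (- (INR (2 * n) + 1)) _ _
                   (is_RInt_wallis (S n)) (is_RInt_wallis n)).
rewrite two_mul_S in Hcomb.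
assert (E := is_RInt_ext_unique _ _ _ _ _ _ Hder Hcomb (fun x => ltac:(cbn beta; ring))).
cbv beta in E. rewrite cos_PI2, sin_0, mult_INR in E. simpl in E. lra.
Qed.

Lemma matsuoka_integral_rec n :
  wallis_integral (S n)
  = (INR n + 1) * (2 * INR n + 1) * matsuoka_integral n
    - 2 * (INR n + 1) ^ 2 * matsuoka_integral (S n).
Proof.
assert (Hder := is_RInt_of_derive _ _ 0 (PI / 2) (is_derive_matsuoka_primitive (2 * n))
                  (fun x => ltac:(auto_derive; easy))).
assert (Hcomb := is_RInt_lincomb _ _ _ _ 1 ((INR (2 * n) + 2) ^ 2 / 2) _ _
   (is_RInt_lincomb _ _ _ _ 1 (- ((INR (2 * n) + 2) * (INR (2 * n) + 1) / 2)) _ _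
      (is_RInt_wallis (S n)) (is_RInt_matsuoka n))
   (is_RInt_matsuoka (S n))).
rewrite two_mul_S in Hcomb.
assert (E := is_RInt_ext_unique _ _ _ _ _ _ Hder Hcomb (fun x => ltac:(cbn beta; ring))).
cbv beta in E. rewrite cos_PI2, sin_0, mult_INR in E. simpl in E. lra.
Qed.

Lemma wallis_integral_0 : wallis_integral 0 = PI / 2.
Proof.
assert (Hder := is_RInt_of_derive (fun x => x) (fun _ => 1) 0 (PI / 2)
                  (fun x => ltac:(auto_derive; easy)) (fun x => ltac:(auto_derive; easy))).
assert (E := is_RInt_ext_unique _ _ _ _ _ _ Hder (is_RInt_wallis 0) (fun x => eq_refl)).
lra.
Qed.

Lemma matsuoka_integral_0 : matsuoka_integral 0 = (PI / 2) ^ 3 / 3.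
Proof.
assert (Hder := is_RInt_of_derive (fun x => x ^ 3 / 3) (fun x => x ^ 2) 0 (PI / 2)
                  (fun x => ltac:(auto_derive; [easy | field]))
                  (fun x => ltac:(auto_derive; easy))).
assert (E := is_RInt_ext_unique _ _ _ _ _ _ Hder (is_RInt_matsuoka 0)
               (fun x => eq_sym (Rmult_1_r _))).
lra.
Qed.

Lemma wallis_integral_pos n : 0 < wallis_integral n.
Proof.
induction n as [|n IH].
- rewrite wallis_integral_0. pose proof PI_RGT_0. lra.
- pose proof (wallis_integral_rec n). pose proof (pos_INR n). nra.
Qed.

Lemma matsuoka_integral_ge0 n : 0 <= matsuoka_integral n.
Proof.
apply (is_RInt_ge_0 _ 0 (PI / 2) _ ltac:(pose proof PI_RGT_0; lra) (is_RInt_matsuoka n)).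
intros x _. apply Rmult_le_pos; [nra|]. rewrite pow_mult. apply pow_le. nra.
Qed.

Lemma sin_ge_third x : 0 <= x <= 2 -> x / 3 <= sin x.
Proof.
intros Hx. destruct (pre_sin_bound x 0 (proj1 Hx) ltac:(lra)) as [Hlb _].
eapply Rle_trans; [|exact Hlb].
unfold sin_approx, sin_term. simpl. nra.
Qed.

(* On [0, pi/2], x^2 <= 9 sin^2 x, and sin^2 x cos^(2n) x is the integrand of I_n - I_(n+1). *)
Lemma matsuoka_integral_le n :
  matsuoka_integral n <= 9 * (wallis_integral n - wallis_integral (S n)).
Proof.
assert (Hcomb := is_RInt_lincomb _ _ _ _ 9 (-9) _ _ (is_RInt_wallis n) (is_RInt_wallis (S n))).
replace (9 * (wallis_integral n - wallis_integral (S n)))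
  with (9 * wallis_integral n + -9 * wallis_integral (S n)) by ring.
pose proof PI_RGT_0. pose proof PI_4.
apply (is_RInt_le _ _ 0 (PI / 2) _ _ ltac:(lra) (is_RInt_matsuoka n) Hcomb).
intros x Hx. rewrite two_mul_S.
assert (HC : 0 <= cos x ^ (2 * n)) by (rewrite pow_mult; apply pow_le; nra).
assert (Hsin := sin_ge_third x ltac:(lra)).
pose proof (sin2_cos2 x) as Hpyth; unfold Rsqr in Hpyth.
replace (cos x ^ S (S (2 * n))) with (cos x ^ 2 * cos x ^ (2 * n)) by (simpl; ring).
assert (x ^ 2 <= 9 * (sin x * sin x)) by nra.
nra.
Qed.

Definition matsuoka_ratio (n : nat) : R := matsuoka_integral n / wallis_integral n.

Lemma inv_sq_eq_matsuoka_ratio_diff n :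
  / (INR n + 1) ^ 2 = 2 * (matsuoka_ratio n - matsuoka_ratio (S n)).
Proof.
unfold matsuoka_ratio.
pose proof (wallis_integral_rec n). pose proof (matsuoka_integral_rec n).
pose proof (wallis_integral_pos n). pose proof (wallis_integral_pos (S n)). pose proof (pos_INR n).
replace (wallis_integral n)
  with ((2 * INR n + 2) * wallis_integral (S n) / (2 * INR n + 1)) by (field_simplify_eq; lra).
replace (matsuoka_integral (S n))
  with (((INR n + 1) * (2 * INR n + 1) * matsuoka_integral n - wallis_integral (S n))
        / (2 * (INR n + 1) ^ 2)) by (field_simplify_eq; nra).
field. repeat split; nra.
Qed.

Lemma sum_inv_sq N :
  sum_n (fun k => / (INR k + 1) ^ 2) N = 2 * (matsuoka_ratio 0 - matsuoka_ratio (S N)).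
Proof.
induction N as [|N IH].
- rewrite sum_O. apply inv_sq_eq_matsuoka_ratio_diff.
- rewrite sum_Sn, IH, (inv_sq_eq_matsuoka_ratio_diff (S N)). cbn. ring.
Qed.

Lemma matsuoka_ratio_bound n : 0 <= matsuoka_ratio n <= 9 / 2 * / INR (S n).
Proof.
unfold matsuoka_ratio.
pose proof (wallis_integral_pos n). pose proof (matsuoka_integral_ge0 n).
pose proof (matsuoka_integral_le n). pose proof (wallis_integral_rec n). pose proof (pos_INR n).
rewrite S_INR. split.
- apply Rdiv_le_0_compat; lra.
- apply (Rmult_le_reg_r (wallis_integral n)); [lra|].
  replace (9 / 2 * / (INR n + 1) * wallis_integral n)
    with (9 * (wallis_integral n - wallis_integral (S n))) by (field_simplify_eq; nra).
  field_simplify; lra.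
Qed.

Lemma is_lim_seq_matsuoka_ratio : is_lim_seq matsuoka_ratio 0.
Proof.
apply is_lim_seq_le_le with (u := fun _ => 0) (w := fun n => 9 / 2 * / INR (S n)).
- apply matsuoka_ratio_bound.
- apply is_lim_seq_const.
- replace (Finite 0) with (Rbar_mult (9 / 2) 0) by (simpl; f_equal; ring).
  apply is_lim_seq_scal_l.
  apply -> (is_lim_seq_incr_1 (fun n => / INR n)).
  replace (Finite 0) with (Rbar_inv p_infty) by reflexivity.
  apply is_lim_seq_inv; [apply is_lim_seq_INR | discriminate].
Qed.

Lemma is_series_inv_sq : is_series (fun k => / (INR k + 1) ^ 2) (PI ^ 2 / 6).
Proof.
replace (PI ^ 2 / 6) with (2 * (matsuoka_ratio 0 - 0)).
2:{ unfold matsuoka_ratio. rewrite wallis_integral_0, matsuoka_integral_0.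
    pose proof PI_RGT_0. field. lra. }
assert (Hlim : is_lim_seq (fun N => 2 * (matsuoka_ratio 0 - matsuoka_ratio (S N)))
                         (2 * (matsuoka_ratio 0 - 0))).
{ apply (is_lim_seq_scal_l _ 2 (Finite (matsuoka_ratio 0 - 0))).
  apply is_lim_seq_minus'; [apply is_lim_seq_const|].
  apply -> (is_lim_seq_incr_1 matsuoka_ratio). apply is_lim_seq_matsuoka_ratio. }
exact (is_lim_seq_ext _ _ _ (fun N => eq_sym (sum_inv_sq N)) Hlim).
Qed.

(** * The objective on finitely supported sequences *)

Definition vanishes_from (x : nat -> R) (N : nat) : Prop :=
  forall k, (N <= k)%nat -> x k = 0.

Lemma is_series_vanishes_from (a : nat -> R) N : vanishes_from a N -> is_series a (sum_n a N).
Proof.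
intros Ha. apply (filterlim_ext_loc (fun _ => sum_n a N)); [|apply filterlim_const].
exists N. intros n Hn. induction Hn as [|m Hm IH]; [reflexivity|].
rewrite sum_Sn, (Ha (S m)) by lia. rewrite IH. symmetry. apply Rplus_0_r.
Qed.

Lemma opA_vanishes_from x N : vanishes_from x N -> vanishes_from (opA x) (S N).
Proof. intros Hx [|k] Hk; [lia|]. simpl. rewrite !Hx by lia. ring. Qed.

Lemma sum_n_opA x N : sum_n (opA x) N = x N.
Proof.
induction N as [|N IH]; [rewrite sum_O; reflexivity|].
rewrite sum_Sn, IH. cbn. ring.
Qed.

Lemma opA_scal t x k : opA (fun j => t * x j) k = t * opA x k.
Proof. destruct k; simpl; ring. Qed.

Lemma opA_zero_seq k : opA zero_seq k = 0.
Proof. destruct k; unfold zero_seq; simpl; ring. Qed.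

Definition weighted_sq_sum (z : nat -> R) (N : nat) : R :=
  sum_n (fun k => (INR k + 1) ^ 2 / 2 * z k ^ 2) N.

Lemma weighted_sq_sum_ge0 z N : 0 <= weighted_sq_sum z N.
Proof.
assert (Hterm : forall k, 0 <= (INR k + 1) ^ 2 / 2 * z k ^ 2).
{ intros k. apply Rmult_le_pos; [apply Rmult_le_pos; [apply pow2_ge_0 | lra] | apply pow2_ge_0]. }
induction N as [|N IH]; unfold weighted_sq_sum in *.
- rewrite sum_O. apply Hterm.
- rewrite sum_Sn. apply Rplus_le_le_0_compat; [exact IH | apply Hterm].
Qed.

Lemma weighted_sq_sum_scal t z N :
  weighted_sq_sum (fun k => t * z k) N = t ^ 2 * weighted_sq_sum z N.
Proof.
induction N as [|N IH]; unfold weighted_sq_sum in *.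
- rewrite !sum_O. ring.
- rewrite !sum_Sn, IH. cbn. ring.
Qed.

Lemma f_term_expand z k :
  f_term z k = / (INR k + 1) ^ 2 / 2 + ((INR k + 1) ^ 2 / 2 * z k ^ 2 - z k).
Proof. unfold f_term. rewrite plus_INR. simpl (INR 1). pose proof (pos_INR k). field. lra. Qed.

Lemma is_series_f_term z N : vanishes_from z N ->
  is_series (f_term z) (PI ^ 2 / 12 + (weighted_sq_sum z N - sum_n z N)).
Proof.
intros Hz. apply (is_series_ext _ _ _ (fun k => eq_sym (f_term_expand z k))).
assert (Hconst : is_series (fun k => / (INR k + 1) ^ 2 / 2) (PI ^ 2 / 12)).
{ replace (PI ^ 2 / 12) with (/ 2 * (PI ^ 2 / 6)) by field.
  apply (is_series_ext (fun k => / 2 * / (INR k + 1) ^ 2)).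
  - intros k. cbn. field. pose proof (pos_INR k). lra.
  - exact (@is_series_scal_l _ R_NormedModule (/ 2) _ _ is_series_inv_sq). }
assert (Hsq : is_series (fun k => (INR k + 1) ^ 2 / 2 * z k ^ 2) (weighted_sq_sum z N)).
{ apply is_series_vanishes_from. intros k Hk. rewrite Hz by exact Hk. ring. }
exact (is_series_plus _ _ _ _ Hconst
         (is_series_minus _ _ _ _ Hsq (is_series_vanishes_from z N Hz))).
Qed.

Lemma fobj_opA x N : vanishes_from x N ->
  fobj (opA x) = PI ^ 2 / 12 + weighted_sq_sum (opA x) (S N).
Proof.
intros Hx. unfold fobj.
rewrite (is_series_unique _ _ (is_series_f_term _ _ (opA_vanishes_from x N Hx))).
rewrite sum_n_opA, Hx by lia. ring.
Qed.

Lemma fobj_opA_zero_seq : fobj (opA zero_seq) = fobj zero_seq.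
Proof. apply Series_ext. intros k. unfold f_term. now rewrite opA_zero_seq. Qed.

Lemma fobj_zero_seq : fobj zero_seq = PI ^ 2 / 12.
Proof.
unfold fobj. rewrite (is_series_unique _ _ (is_series_f_term zero_seq 0 (fun _ _ => eq_refl))).
unfold weighted_sq_sum, zero_seq. rewrite !sum_O. cbn. ring.
Qed.

Lemma fobj_opA_scal t y N : vanishes_from y N ->
  fobj (opA (fun k => t * y k)) = PI ^ 2 / 12 + t ^ 2 * weighted_sq_sum (opA y) (S N).
Proof.
intros Hy. rewrite (fobj_opA _ N) by (intros k Hk; rewrite Hy by exact Hk; ring).
rewrite <- weighted_sq_sum_scal. unfold weighted_sq_sum. f_equal.
apply sum_n_ext. intros k. now rewrite opA_scal.
Qed.

Lemma filterlim_at_right_mul_const (Q : R) :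
  filterlim (fun t => t * Q) (at_right 0) (locally 0).
Proof.
apply (filterlim_filter_le_1 (F := locally 0)).
{ intros P HP. unfold at_right, within. apply (filter_imp P); auto. }
replace 0 with (0 * Q) at 2 by ring.
apply (@ex_derive_continuous R_AbsRing R_NormedModule (fun t => t * Q)).
auto_derive. easy.
Qed.

Theorem mainTheorem10 :
  (forall x, cc x -> cc (opA x)) /\
  (forall x, cc x -> ex_series (f_term x)) /\
  (forall x, cc x -> fobj (opA zero_seq) <= fobj (opA x)) /\
  fobj (opA zero_seq) = fobj zero_seq /\
  fobj zero_seq = PI ^ 2 / 12 /\
  (forall y, cc y ->
     filterlim (fun t => (fobj (opA (fun k => t * y k)) - fobj (opA zero_seq)) / t)
               (at_right 0) (locally 0)).
Proof.
assert (Hmin : fobj (opA zero_seq) = PI ^ 2 / 12)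
  by (rewrite fobj_opA_zero_seq; exact fobj_zero_seq).
split; [|split; [|split; [|split; [|split]]]].
- intros x [N Hx]. exists (S N). exact (opA_vanishes_from x N Hx).
- intros x [N Hx]. eexists. exact (is_series_f_term x N Hx).
- intros x [N Hx]. rewrite Hmin, (fobj_opA x N Hx).
  pose proof (weighted_sq_sum_ge0 (opA x) (S N)). lra.
- exact fobj_opA_zero_seq.
- exact fobj_zero_seq.
- intros y [N Hy].
  apply (filterlim_ext (fun t => t * weighted_sq_sum (opA y) (S N)));
    [|apply filterlim_at_right_mul_const].
  intros t. rewrite Hmin, (fobj_opA_scal t y N Hy).
  destruct (Req_dec t 0) as [->|Ht]; [unfold Rdiv; rewrite Rinv_0; ring | field; exact Ht].
Qed.
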